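(* Let $\lambda>0$ and $\mu\ge0$ be reals and let $(G_n)_{n\ge1}$ be elements of $\mathcal H$ such that the infinite product $\prod_n G_n$ is of type $(\lambda,\mu)$. Then $\prod_{n\ge1}G_n$ converges in $\mathcal H$ to an element $G$ of order at most $\mu$.
   Context: Let $p$ be an odd prime. $\mathcal H$ is the ring of power series in $\mathbb Q_p[[x]]$ converging on the open unit disc of $\mathbb C_p$, with its Fréchet topology given by the norms $\|f\|_\rho=\sup_{|z|_p\le\rho}|f(z)|_p$, $0<\rho<1$; put $\|f\|_1=\sup_{\rho<1}\|f\|_\rho\in[0,\infty]$. Let $\rho_0=p^{-1/(p-1)}$ and, for $0<\rho<1$, let $n_0(\rho)$ be the smallest integer $\ge0$ with $\rho^{p^{n_0(\rho)}}\le\rho_0$. A product $\prod_nG_n$ is of type $(\lambda,\mu)$ if (1) $\|G_n\|_1\le p^{\mu}$ for all $n$, and (2) there is a constant $\nu$ such that for every real $0<\rho<1$ and every $n\ge n_0(\rho)$, $\|G_n-1\|_\rho\le p^{\nu}p^{-\lambda(n-n_0(\rho))}$. The order of $G\in\mathcal H$ is the infimum of the reals $h$ such that $\sup_{m\ge0}p^{-mh}\|G\|_{\rho^{1/p^m}}<\infty$ for some $\rho\in(0,1)$. *)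

From HB Require Import structures.
From mathcomp Require Import all_boot all_order all_algebra.
From mathcomp Require Import all_classical all_reals all_analysis.
Set Implicit Arguments. Unset Strict Implicit. Unset Printing Implicit Defensive.
Import Order.TTheory GRing.Theory Num.Theory.
Local Open Scope ring_scope.
Local Open Scope classical_set_scope.

(* C_p is modelled abstractly: an algebraically closed field L with an
   absolute value abs : L -> R which is non-archimedean, restricts to the
   p-adic absolute value on the integers (hence on Q), is complete, and in
   which the algebraic numbers (over Q) are dense.  These properties
   characterise C_p up to isometric isomorphism. *)
Record is_Cp (p : nat) (R : realType) (L : closedFieldType) (abs : L -> R)
  : Prop := IsCp {
  abs_ge0 : forall x, 0 <= abs x;
  abs_eq0 : forall x, abs x = 0 <-> x = 0;
  absM : forall x y, abs (x * y) = abs x * abs y;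
  abs_ultra : forall x y, abs (x + y) <= Num.max (abs x) (abs y);
  abs_nat : forall n : nat, (0 < n)%N ->
     abs (n%:R) = ((p%:R : R)^-1) ^+ (logn p n);
  abs_complete : forall u : nat -> L,
     (forall eps : R, 0 < eps -> exists N, forall m n, (N <= m)%N -> (N <= n)%N ->
         abs (u m - u n) < eps) ->
     exists l, forall eps : R, 0 < eps -> exists N, forall n, (N <= n)%N ->
         abs (u n - l) < eps;
  abs_alg_dense : forall (z : L) (eps : R), 0 < eps ->
     exists w : L, (exists q : {poly rat}, q != 0 /\ root (map_poly ratr q) w)
                   /\ abs (z - w) < eps
}.

Definition cvgL (R : realType) (L : closedFieldType) (abs : L -> R)
  (u : nat -> L) (l : L) : Prop :=
  forall eps : R, 0 < eps -> exists N, forall n, (N <= n)%N -> abs (u n - l) < eps.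

(* power series are coefficient sequences f : nat -> L *)
Definition psum (L : closedFieldType) (f : nat -> L) (z : L) (n : nat) : L :=
  \sum_(i < n) f i * z ^+ i.

Definition sums (R : realType) (L : closedFieldType) (abs : L -> R)
  (f : nat -> L) (z s : L) : Prop := cvgL abs (psum f z) s.

Definition in_Qp (R : realType) (L : closedFieldType) (abs : L -> R) (a : L) : Prop :=
  forall eps : R, 0 < eps -> exists q : rat, abs (a - ratr q) < eps.

Definition in_H (R : realType) (L : closedFieldType) (abs : L -> R)
  (f : nat -> L) : Prop :=
  (forall n, in_Qp abs (f n)) /\
  (forall z, abs z < 1 -> exists s, sums abs f z s).

Definition normrho (R : realType) (L : closedFieldType) (abs : L -> R)
  (f : nat -> L) (rho : R) : \bar R :=
  ereal_sup [set x | exists z s, abs z <= rho /\ sums abs f z s /\ x = (abs s)%:E].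

Definition norm1 (R : realType) (L : closedFieldType) (abs : L -> R)
  (f : nat -> L) : \bar R :=
  ereal_sup [set x | exists rho : R, 0 < rho < 1 /\ x = normrho abs f rho].

Definition ps_one (L : closedFieldType) : nat -> L := fun n => if n == 0%N then 1 else 0.
Definition ps_sub (L : closedFieldType) (f g : nat -> L) : nat -> L := fun n => f n - g n.
Definition ps_mul (L : closedFieldType) (f g : nat -> L) : nat -> L :=
  fun n => \sum_(i < n.+1) f i * g (n - i)%N.

Fixpoint pprod (L : closedFieldType) (G : nat -> nat -> L) (N : nat) : nat -> L :=
  match N with
  | 0 => ps_one L
  | N'.+1 => ps_mul (pprod G N') (G N'.+1)
  end.

Definition rho0 (R : realType) (p : nat) : R := (p%:R : R) `^ (- (p.-1%:R)^-1).

Definition is_n0 (R : realType) (p : nat) (rho : R) (k : nat) : Prop :=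
  rho ^+ (p ^ k) <= rho0 R p /\
  (forall j, (j < k)%N -> rho0 R p < rho ^+ (p ^ j)).

Definition type_lm (p : nat) (R : realType) (L : closedFieldType) (abs : L -> R)
  (G : nat -> nat -> L) (lam mu : R) : Prop :=
  (forall n, (1 <= n)%N -> (norm1 abs (G n) <= ((p%:R : R) `^ mu)%:E)%E) /\
  exists nu : R, forall rho : R, 0 < rho < 1 -> forall k, is_n0 p rho k ->
    forall n, (k <= n)%N -> (1 <= n)%N ->
      (normrho abs (ps_sub (G n) (ps_one L)) rho <=
        ((p%:R : R) `^ nu * (p%:R : R) `^ (- (lam * (n - k)%:R)))%:E)%E.

Definition order_set (p : nat) (R : realType) (L : closedFieldType) (abs : L -> R)
  (f : nat -> L) : set R :=
  [set h | exists rho : R, 0 < rho < 1 /\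
     (ereal_sup [set x | exists m : nat, x =
        (((p%:R : R) `^ (- (m%:R * h)))%:E *
          normrho abs f (rho `^ ((p ^ m)%:R)^-1))%E] < +oo)%E].

Definition ps_order (p : nat) (R : realType) (L : closedFieldType) (abs : L -> R)
  (f : nat -> L) : \bar R :=
  ereal_inf [set x | exists h, order_set p abs f h /\ x = h%:E].

(* For 0 < r < 1 let |f|_r = sup_i |f_i| r^i be the Gauss norm.  Averaging a
   series over the q-th roots of unity, for a large prime q <> p, shows that
   |f|_r <= sup_{|z| <= r} |f(z)|, so the hypotheses become Gauss-norm bounds at
   every radius r = |w| with k = n_0(r):  |G_n|_r <= p^mu, and
   |G_n - 1|_r <= p^nu p^(-lam (n - k)) for n >= k.  Choosing c with lam c >= nu,
   the factors with n >= k + c have |G_n|_r <= 1, so the ultrametric inequality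
   and submultiplicativity give |G_1 ... G_N|_r <= p^(mu (k + c)) and
   |G_1 ... G_(N+d) - G_1 ... G_N|_r <= B_k p^(-lam (N - k)) with
   B_k = p^(mu (k + c)) max(1, p^nu).  Hence the coefficients converge (in Q_p,
   which is closed under ring operations and limits), the product converges
   uniformly on every disc, and the limit G satisfies |G|_r <= B_k.  Finally the
   radii r_m = p^(-1/p^m) satisfy n_0(r_m) <= n_0(1/p) + m, whence
   |G|_(r_m) <= p^(mu m) B_(n_0(1/p)), i.e. G has order at most mu. *)

From HB Require Import structures.
From mathcomp Require Import all_boot all_order all_algebra.
From mathcomp Require Import all_classical all_reals all_analysis.
From mathcomp Require Import ring.
Import Order.TTheory GRing.Theory Num.Theory.
Local Open Scope ring_scope.
Set Implicit Arguments. Unset Strict Implicit. Unset Printing Implicit Defensive.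

Section RatrChar0.
Variable F : fieldType.
Hypothesis F_char0 : forall n, (0 < n)%N -> n%:R != 0 :> F.

Lemma intr_char0_neq0 (d : int) : d != 0 -> d%:~R != 0 :> F.
Proof.
case: d => [[|n]|n] // _; first exact: F_char0.
by rewrite NegzE mulrNz oppr_eq0; apply: F_char0.
Qed.

Lemma denq_char0_neq0 x : (denq x)%:~R != 0 :> F.
Proof. exact/intr_char0_neq0/denq_neq0. Qed.

Lemma ratr_frac (n d : int) : d != 0 -> ratr (n%:~R / d%:~R) = n%:~R / d%:~R :> F.
Proof.
move=> d0; set x : rat := n%:~R / d%:~R.
have cross : numq x * d = n * denq x.
  apply: (@intr_inj rat); rewrite !rmorphM /= numqE /x.
  by field; rewrite intr_eq0 ?denq_neq0.
apply/eqP; rewrite /ratr eqr_div ?intr_char0_neq0 ?denq_neq0 //.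
by rewrite -!rmorphM /= cross.
Qed.

Lemma ratrD_char0 x y : ratr (x + y) = ratr x + ratr y :> F.
Proof.
have dx := denq_neq0 x; have dy := denq_neq0 y.
have -> : x + y = (numq x * denq y + numq y * denq x)%:~R / (denq x * denq y)%:~R.
  rewrite -{1}[x]divq_num_den -{1}[y]divq_num_den !rmorphD !rmorphM /=.
  by field; rewrite !intr_eq0; apply/andP; split; apply: denq_neq0.
rewrite ratr_frac ?mulf_neq0 // /ratr !rmorphD !rmorphM /=.
by field; rewrite !denq_char0_neq0.
Qed.

Lemma ratrM_char0 x y : ratr (x * y) = ratr x * ratr y :> F.
Proof.
have dx := denq_neq0 x; have dy := denq_neq0 y.
have -> : x * y = (numq x * numq y)%:~R / (denq x * denq y)%:~R.
  rewrite -{1}[x]divq_num_den -{1}[y]divq_num_den !rmorphM /=.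
  by field; rewrite !intr_eq0; apply/andP; split; apply: denq_neq0.
rewrite ratr_frac ?mulf_neq0 // /ratr !rmorphM /=.
by field; rewrite !denq_char0_neq0.
Qed.

End RatrChar0.

Lemma exists_nth_root (F : closedFieldType) (c : F) n : (0 < n)%N ->
  exists x : F, x ^+ n = c.
Proof.
case: n => // n _.
have [x x_root] := @solve_monicpoly F n.+1 (fun i => if i == 0%N then c else 0) isT.
exists x; rewrite x_root big_ord_recl /= expr0 mulr1 big1 ?addr0 // => i _.
by rewrite mul0r.
Qed.

Lemma sum_expr_unity_root (F : idomainType) (w : F) q :
  w ^+ q = 1 -> w != 1 -> \sum_(j < q) w ^+ j = 0.
Proof.
move=> wq w_neq1; apply/eqP.
have /eqP := subrX1 w q; rewrite wq subrr eq_sym mulf_eq0 subr_eq0.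
by rewrite (negbTE w_neq1).
Qed.

Lemma prim_root_exists (F : closedFieldType) q :
  prime q -> q%:R != 0 :> F -> exists z : F, q.-primitive_root z.
Proof.
move=> q_prime q_neq0; have q_gt0 := prime_gt0 q_prime.
have q1_gt0 : (0 < q.-1)%N by rewrite -subn1 subn_gt0 prime_gt1.
have [z z_root] := @solve_monicpoly F q.-1 (fun _ => -1) q1_gt0.
have sum_z : \sum_(i < q) z ^+ i = 0.
  rewrite -(prednK q_gt0) big_ord_recr /= z_root -big_split /=.
  by rewrite big1 // => i _; rewrite mulN1r addrN.
have zq : z ^+ q = 1 by apply/eqP; rewrite -subr_eq0 subrX1 sum_z mulr0.
have [m z_prim m_dvd] := prim_order_exists q_gt0 zq.
have /primeP[_ /(_ m m_dvd)/orP[/eqP m1|/eqP mq]] := q_prime; last first.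
  by exists z; rewrite -mq.
move: sum_z; rewrite m1 in z_prim; rewrite -[z]expr1 (prim_expr_order z_prim).
under eq_bigr do rewrite expr1n.
by rewrite sumr_const card_ord => /eqP; rewrite (negbTE q_neq0).
Qed.

Lemma sum_prim_root_filter (F : idomainType) (z u : F) q i k :
  q.-primitive_root z -> u * z ^+ i = 1 -> (i < q)%N -> (k < q)%N ->
  \sum_(j < q) (u * z ^+ k) ^+ j = if k == i then q%:R else 0.
Proof.
move=> z_prim u_zi iq kq; case: eqP => [->|/eqP k_neq_i].
  by rewrite u_zi; under eq_bigr do rewrite expr1n; rewrite sumr_const card_ord.
apply: sum_expr_unity_root.
  have zq := prim_expr_order z_prim.
  have uq : u ^+ q = 1.
    by have := congr1 (fun x => x ^+ q) u_zi; rewrite /= exprMn exprAC zq !expr1n mulr1.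
  by rewrite exprMn uq exprAC zq !expr1n mulr1.
apply: contra k_neq_i => /eqP w1.
have : z ^+ i == z ^+ k by rewrite -[z ^+ i]mulr1 -w1 mulrA (mulrC _ u) u_zi mul1r.
by rewrite (eq_prim_root_expr z_prim) !modn_small // eq_sym.
Qed.

Lemma psum_unity_average (L : closedFieldType) (f : nat -> L) (z u z0 : L) q n :
  \sum_(j < q) u ^+ j * psum f (z ^+ j * z0) n =
  \sum_(k < n) f k * z0 ^+ k * \sum_(j < q) (u * z ^+ k) ^+ j.
Proof.
rewrite /psum; under eq_bigr do rewrite mulr_sumr.
rewrite exchange_big /=; apply: eq_bigr => k _; rewrite mulr_sumr.
apply: eq_bigr => j _; rewrite !exprMn -!exprM mulnC; ring.
Qed.

Lemma geometric_small (R : realType) (E a eps : R) : 0 <= a -> a < 1 -> 0 < eps ->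
  exists N, forall m, (N <= m)%N -> E * a ^+ m < eps.
Proof.
move=> a_ge0 a_lt1 eps_gt0.
have E1_gt0 : 0 < `|E| + 1 by rewrite ltr_wpDl.
have a_norm : `|a| < 1 by rewrite ger0_norm.
have /cvgrPdist_lt /(_ _ (divr_gt0 eps_gt0 E1_gt0)) [N _ hN] := cvg_expr a_norm.
exists N => m /hN; rewrite /= sub0r normrN ger0_norm ?exprn_ge0 // => am.
apply: (@le_lt_trans _ _ ((`|E| + 1) * a ^+ m)); last by rewrite mulrC -ltr_pdivlMr.
by rewrite ler_wpM2r ?exprn_ge0 // (le_trans (ler_norm E)) ?lerDl.
Qed.

Lemma powR_oppM_nat (R : realType) (x y : R) m : 0 <= x ->
  x `^ (- (y * m%:R)) = (x `^ (- y)) ^+ m.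
Proof. by move=> x_ge0; rewrite -mulNr powRrM powR_mulrn // powR_ge0. Qed.

Lemma is_n0_exists (R : realType) p (rho : R) : prime p -> 0 < rho -> rho < 1 ->
  exists k, is_n0 p rho k.
Proof.
move=> p_prime rho_gt0 rho_lt1.
have rho0_gt0 : 0 < rho0 R p by apply: powR_gt0; rewrite ltr0n prime_gt0.
have [n hn] := geometric_small 1 (ltW rho_gt0) rho_lt1 rho0_gt0.
have small_pow : exists k, rho ^+ (p ^ k) <= rho0 R p.
  by exists n; rewrite ltW // -[_ ^+ _]mul1r hn // ltnW // ltn_expl // prime_gt1.
case: (ex_minnP small_pow) => k hk k_min; exists k; split => // j jk.
by rewrite ltNge; apply/negP => /k_min; rewrite leqNgt jk.
Qed.

Lemma is_n0_root_le (R : realType) p (r : R) m k k' :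
  is_n0 p (r ^+ (p ^ m)) k -> is_n0 p r k' -> (k' <= k + m)%N.
Proof.
move=> [hk _] [_ hk']; rewrite leqNgt; apply/negP => /hk'.
by rewrite expnD mulnC exprM ltNge hk.
Qed.

Lemma ps_mul_sub_one (L : closedFieldType) (f g : nat -> L) :
  ps_sub (ps_mul f g) f = ps_mul f (ps_sub g (ps_one L)).
Proof.
apply/funext => n; rewrite /ps_sub /ps_mul.
under [RHS]eq_bigr do rewrite mulrBr.
rewrite sumrB; congr (_ - _); rewrite big_ord_recr /= subnn /ps_one /= mulr1.
rewrite big1 ?add0r // => j _.
by rewrite subn_eq0 leqNgt ltn_ord mulr0.
Qed.

Section CpAnalysis.
Variables (p : nat) (R : realType) (L : closedFieldType) (abs : L -> R).
Hypothesis hC : is_Cp p abs.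
Implicit Types (f g : nat -> L) (z : L).

Local Notation abs_ge0 := (abs_ge0 hC).
Local Notation absM := (absM hC).
Local Notation abs_ultra := (abs_ultra hC).

Lemma abs0 : abs 0 = 0.
Proof. exact/(abs_eq0 hC). Qed.

Lemma abs1 : abs 1 = 1.
Proof.
have abs1_neq0 : abs 1 != 0 by apply/eqP => /(abs_eq0 hC)/eqP; rewrite oner_eq0.
by apply: (mulfI abs1_neq0); rewrite -absM !mulr1.
Qed.

Lemma absX x n : abs (x ^+ n) = abs x ^+ n.
Proof. by elim: n => [|n IH]; rewrite ?abs1 // !exprS absM IH. Qed.

Lemma abs_unity_root z q : (0 < q)%N -> z ^+ q = 1 -> abs z = 1.
Proof.
move=> q_gt0 zq; have : abs z ^+ q = 1 by rewrite -absX zq abs1.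
by move/eqP; rewrite pexpr_eq1 ?abs_ge0 // => /eqP.
Qed.

Lemma absN x : abs (- x) = abs x.
Proof.
have absN1 : abs (-1) = 1 by apply: (@abs_unity_root _ 2); rewrite // sqrrN expr1n.
by rewrite -mulN1r absM absN1 mul1r.
Qed.

Lemma absB x y : abs (x - y) = abs (y - x).
Proof. by rewrite -absN opprB. Qed.

Lemma abs_add_le x y B : abs x <= B -> abs y <= B -> abs (x + y) <= B.
Proof. by move=> hx hy; apply: le_trans (abs_ultra x y) _; rewrite ge_max hx hy. Qed.

Lemma abs_add_lt x y B : abs x < B -> abs y < B -> abs (x + y) < B.
Proof. by move=> hx hy; apply: le_lt_trans (abs_ultra x y) _; rewrite gt_max hx hy. Qed.

Lemma abs_sum_le (I : Type) (r : seq I) (P : pred I) (F : I -> L) B :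
  0 <= B -> (forall i, P i -> abs (F i) <= B) -> abs (\sum_(i <- r | P i) F i) <= B.
Proof.
move=> B_ge0 hF; apply: (big_ind (fun x => abs x <= B)) => //.
  by rewrite abs0.
by move=> x y; apply: abs_add_le.
Qed.

Lemma abs_sum_lt (I : Type) (r : seq I) (P : pred I) (F : I -> L) B :
  0 < B -> (forall i, P i -> abs (F i) < B) -> abs (\sum_(i <- r | P i) F i) < B.
Proof.
move=> B_gt0 hF; apply: (big_ind (fun x => abs x < B)) => //.
  by rewrite abs0.
by move=> x y; apply: abs_add_lt.
Qed.

Lemma abs_add_small x y : abs y < abs x -> abs (x + y) = abs x.
Proof.
move=> yx; apply/eqP; rewrite eq_le; apply/andP; split.
  by apply: abs_add_le => //; apply: ltW.
have := abs_ultra (x + y) (- y); rewrite addrK absN le_max => /orP[//|xy].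
by have := lt_le_trans yx xy; rewrite ltxx.
Qed.

Lemma abs_sum_dominant (I : finType) (F : I -> L) i0 : 0 < abs (F i0) ->
  (forall j, j != i0 -> abs (F j) < abs (F i0)) -> abs (\sum_j F j) = abs (F i0).
Proof. by move=> F_gt0 dom; rewrite (bigD1 i0) //= abs_add_small // abs_sum_lt. Qed.

Lemma cvgL_cst c : cvgL abs (fun _ => c) c.
Proof. by move=> eps eps_gt0; exists 0%N => n _; rewrite subrr abs0. Qed.

Lemma cvgLD u v l m :
  cvgL abs u l -> cvgL abs v m -> cvgL abs (fun n => u n + v n) (l + m).
Proof.
move=> hu hv eps eps_gt0.
have [N1 h1] := hu eps eps_gt0; have [N2 h2] := hv eps eps_gt0.
exists (maxn N1 N2) => n; rewrite geq_max => /andP[n1 n2].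
by rewrite opprD addrACA; apply: abs_add_lt; [apply: h1 | apply: h2].
Qed.

Lemma cvgLN u l : cvgL abs u l -> cvgL abs (fun n => - u n) (- l).
Proof.
move=> hu eps /hu[N hN]; exists N => n /hN.
by rewrite -opprD absN.
Qed.

Lemma cvgLB u v l m :
  cvgL abs u l -> cvgL abs v m -> cvgL abs (fun n => u n - v n) (l - m).
Proof. by move=> hu /cvgLN; apply: cvgLD. Qed.

Lemma cvgLMl c u l : cvgL abs u l -> cvgL abs (fun n => c * u n) (c * l).
Proof.
move=> hu eps eps_gt0.
have c1_gt0 : 0 < abs c + 1 by rewrite ltr_wpDl ?abs_ge0.
have [N hN] := hu (eps / (abs c + 1)) (divr_gt0 eps_gt0 c1_gt0).
exists N => n /hN un; rewrite -mulrBr absM.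
apply: (@le_lt_trans _ _ ((abs c + 1) * abs (u n - l))).
  by rewrite ler_wpM2r ?abs_ge0 ?lerDl.
by rewrite mulrC -ltr_pdivlMr.
Qed.

Lemma cvgL_sum q (U : nat -> nat -> L) (l : nat -> L) :
  (forall j, (j < q)%N -> cvgL abs (U j) (l j)) ->
  cvgL abs (fun n => \sum_(j < q) U j n) (\sum_(j < q) l j).
Proof.
elim: q => [_|q IH hU].
  by move=> eps eps_gt0; exists 0%N => n _; rewrite !big_ord0 subrr abs0.
have := cvgLD (IH (fun j jq => hU j (ltnW jq))) (hU q (ltnSn q)).
by move=> h eps /h[N hN]; exists N => n /hN; rewrite !big_ord_recr.
Qed.

Lemma cvgL_eventually_eq u v l N0 :
  (forall n, (N0 <= n)%N -> u n = v n) -> cvgL abs v l -> cvgL abs u l.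
Proof.
move=> uv hv eps /hv[N hN]; exists (maxn N N0) => n.
by rewrite geq_max => /andP[nN nN0]; rewrite uv //; apply: hN.
Qed.

Lemma cvgL_abs_le u l B N0 :
  cvgL abs u l -> (forall n, (N0 <= n)%N -> abs (u n) <= B) -> abs l <= B.
Proof.
move=> hu hB; rewrite leNgt; apply/negP => Bl.
have [N hN] : exists N, forall n, (N <= n)%N -> abs (u n - l) < abs l - B.
  by apply: hu; rewrite subr_gt0.
set n := maxn N N0.
have B_ge0 : 0 <= B := le_trans (abs_ge0 _) (hB N0 (leqnn _)).
have : abs l < abs l.
  rewrite {1}(_ : l = u n - (u n - l)); last by rewrite opprB addrC subrK.
  apply: abs_add_lt; first exact: le_lt_trans (hB n (leq_maxr _ _)) Bl.
  by rewrite absN; apply: lt_le_trans (hN n (leq_maxl _ _)) _; rewrite lerBlDr lerDl.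
by rewrite ltxx.
Qed.

Lemma cvgL_abs_eq u l c N0 :
  cvgL abs u l -> 0 < c -> (forall n, (N0 <= n)%N -> abs (u n) = c) -> abs l = c.
Proof.
move=> hu c_gt0 hc; have [N hN] := hu c c_gt0.
set n := maxn N N0.
have -> : l = u n + - (u n - l) by rewrite opprB addrC subrK.
by rewrite abs_add_small hc ?leq_maxr // absN hN ?leq_maxl.
Qed.

Lemma psum_sub f z n m : (n <= m)%N ->
  psum f z m - psum f z n = \sum_(n <= i < m) f i * z ^+ i.
Proof.
move=> nm; rewrite /psum -!(big_mkord xpredT (fun i => f i * z ^+ i)).
by rewrite (big_cat_nat (leq0n n) nm) /= [X in X - _]addrC addrK.
Qed.

Lemma sums_terms_cvg0 f z s : sums abs f z s -> cvgL abs (fun k => f k * z ^+ k) 0.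
Proof.
move=> hs eps /hs[N hN]; exists N => k kN; rewrite subr0.
have -> : f k * z ^+ k = (psum f z k.+1 - s) - (psum f z k - s).
  by rewrite /psum big_ord_recr /= opprB addrA subrK addrC addKr.
by apply: abs_add_lt; rewrite ?absN hN // leqW.
Qed.

Lemma sums_of_terms_cvg0 f z : cvgL abs (fun k => f k * z ^+ k) 0 ->
  exists s, sums abs f z s.
Proof.
move=> ht; apply: (abs_complete hC) => eps eps_gt0.
have [K hK] := ht eps eps_gt0; exists K => m n mK nK.
wlog nm : m n mK nK / (n <= m)%N.
  by move=> H; case: (leqP n m) => [|/ltnW] nm; [|rewrite absB]; apply: H.
rewrite psum_sub // big_nat_cond; apply: abs_sum_lt => // i /andP[/andP[ni _] _].
by rewrite -[f i * _]subr0; apply: hK; apply: leq_trans ni.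
Qed.

Lemma sumsB f g z s t :
  sums abs f z s -> sums abs g z t -> sums abs (ps_sub f g) z (s - t).
Proof.
move=> hf hg; apply: (cvgL_eventually_eq (N0 := 0%N) _ (cvgLB hf hg)) => n _.
by rewrite /psum /ps_sub -sumrB; apply: eq_bigr => i _; rewrite mulrBl.
Qed.

Lemma sums_one z : sums abs (ps_one L) z 1.
Proof.
apply: (cvgL_eventually_eq (N0 := 1%N) _ (cvgL_cst 1)).
case=> // n _; rewrite /psum big_ord_recl /= expr0 mulr1 big1 ?addr0 // => i _.
by rewrite mul0r.
Qed.

Lemma cvgL_unity_average f z0 z u q (sj : nat -> L) :
  (forall j, sums abs f (z ^+ j * z0) (sj j)) ->
  cvgL abs (fun n => \sum_(k < n) f k * z0 ^+ k * \sum_(j < q) (u * z ^+ k) ^+ j)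
    (\sum_(j < q) u ^+ j * sj j).
Proof.
move=> hsj; apply: (cvgL_eventually_eq (N0 := 0%N) (v := fun n =>
  \sum_(j < q) u ^+ j * psum f (z ^+ j * z0) n)) => [n _|].
  by rewrite psum_unity_average.
apply: (cvgL_sum (U := fun j n => u ^+ j * psum f (z ^+ j * z0) n)
  (l := fun j => u ^+ j * sj j)) => j _.
exact: cvgLMl (hsj j).
Qed.

Definition gauss_le (f : nat -> L) (r B : R) := forall i, abs (f i) * r ^+ i <= B.

Lemma gauss_le_ge0 f r B : gauss_le f r B -> 0 <= B.
Proof. by move/(_ 0%N); rewrite expr0 mulr1; apply: le_trans (abs_ge0 _). Qed.

Lemma gauss_le_trans f r A B : gauss_le f r A -> A <= B -> gauss_le f r B.
Proof. by move=> hf AB i; apply: le_trans (hf i) AB. Qed.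

Lemma gauss_leD f g r B : 0 <= r -> gauss_le f r B -> gauss_le g r B ->
  gauss_le (fun n => f n + g n) r B.
Proof.
move=> r_ge0 hf hg i; apply: le_trans (ler_wpM2r (exprn_ge0 i r_ge0) (abs_ultra _ _)) _.
by rewrite maxr_pMl ?exprn_ge0 // ge_max hf hg.
Qed.

Lemma gauss_leB f g r B : 0 <= r -> gauss_le f r B -> gauss_le g r B ->
  gauss_le (ps_sub f g) r B.
Proof. by move=> r_ge0 hf hg; apply: gauss_leD => // i; rewrite absN. Qed.

Lemma gauss_le_one r : gauss_le (ps_one L) r 1.
Proof. by case=> [|i]; rewrite /ps_one /= ?abs1 ?abs0 ?expr0 ?mulr1 ?mul0r. Qed.

Lemma gauss_leM f g r A B : 0 <= r -> gauss_le f r A -> gauss_le g r B ->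
  gauss_le (ps_mul f g) r (A * B).
Proof.
move=> r_ge0 hf hg n; have [rn0|rn_neq0] := eqVneq (r ^+ n) 0.
  by rewrite rn0 mulr0 mulr_ge0 // (gauss_le_ge0 hf, gauss_le_ge0 hg).
have rn_gt0 : 0 < r ^+ n by rewrite lt_def rn_neq0 exprn_ge0.
rewrite -ler_pdivlMr //; apply: abs_sum_le => [|i _].
  by rewrite divr_ge0 ?mulr_ge0 ?(gauss_le_ge0 hf, gauss_le_ge0 hg) ?ltW.
rewrite ler_pdivlMr // absM -[in r ^+ n](subnKC (ltnSE (ltn_ord i))) exprD mulrACA.
by rewrite ler_pM ?mulr_ge0 ?abs_ge0 ?exprn_ge0.
Qed.

Lemma gauss_le_sums_abs f r B z s :
  gauss_le f r B -> abs z <= r -> sums abs f z s -> abs s <= B.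
Proof.
move=> hf zr hs; apply: (cvgL_abs_le (N0 := 0%N) hs) => n _.
apply: abs_sum_le => [|i _]; first exact: gauss_le_ge0 hf.
rewrite absM absX; apply: le_trans (hf i); rewrite ler_wpM2l ?abs_ge0 //.
by rewrite lerXn2r ?nnegrE ?abs_ge0 // (le_trans (abs_ge0 z)).
Qed.

Lemma normrho_le_gauss f r rho B :
  gauss_le f r B -> rho <= r -> (normrho abs f rho <= B%:E)%E.
Proof.
move=> hf rho_r; apply: ge_ereal_sup => _ [z [s [zrho [hs ->]]]].
by rewrite lee_fin (gauss_le_sums_abs hf _ hs) // (le_trans zrho).
Qed.

Lemma gauss_le_sums f r B z : gauss_le f r B -> abs z < r -> exists s, sums abs f z s.
Proof.
move=> hf zr; apply: sums_of_terms_cvg0 => eps eps_gt0.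
have r_gt0 : 0 < r := le_lt_trans (abs_ge0 z) zr.
have y_ge0 : 0 <= abs z / r by rewrite divr_ge0 ?abs_ge0 ?ltW.
have y_lt1 : abs z / r < 1 by rewrite ltr_pdivrMr // mul1r.
have [K hK] := geometric_small B y_ge0 y_lt1 eps_gt0.
exists K => i /hK; apply: le_lt_trans; rewrite subr0 absM absX.
have -> : abs z ^+ i = (abs z / r) ^+ i * r ^+ i by rewrite -exprMn divfK ?lt0r_neq0.
by rewrite mulrA mulrAC ler_wpM2r ?exprn_ge0.
Qed.

Hypothesis p_prime : prime p.

Local Notation P := (p%:R : R).

Lemma P_gt1 : 1 < P.
Proof. by rewrite ltr1n prime_gt1. Qed.

Lemma P_gt0 : 0 < P.
Proof. exact: lt_trans ltr01 P_gt1. Qed.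

Lemma natr_neq0 n : (0 < n)%N -> n%:R != 0 :> L.
Proof.
move=> n_gt0; apply/eqP => /(congr1 abs); rewrite (abs_nat hC n_gt0) abs0.
by apply/eqP; rewrite expf_neq0 // invr_neq0 // lt0r_neq0 ?P_gt0.
Qed.

Lemma abs_natr_prime q : prime q -> q != p -> abs q%:R = 1.
Proof.
move=> q_prime qp; rewrite (abs_nat hC (prime_gt0 q_prime)) logn_coprime ?expr0 //.
by rewrite prime_coprime // dvdn_prime2 // eq_sym.
Qed.

Lemma abs_natr_p : abs p%:R = P^-1.
Proof. by rewrite (abs_nat hC (prime_gt0 p_prime)) logn_prime // eqxx expr1. Qed.

Lemma gauss_le_of_sums_bound f z0 M :
  (forall z, abs z <= abs z0 -> exists s, sums abs f z s) ->
  (forall z s, abs z <= abs z0 -> sums abs f z s -> abs s <= M) ->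
  gauss_le f (abs z0) M.
Proof.
move=> f_sums f_bound i; rewrite leNgt; apply/negP => M_lt.
set t := abs (f i) * abs z0 ^+ i.
have M_ge0 : 0 <= M.
  have z0_r : abs 0 <= abs z0 by rewrite abs0 abs_ge0.
  by have [s hs] := f_sums 0 z0_r; apply: le_trans (abs_ge0 s) (f_bound _ _ z0_r hs).
have t_gt0 : 0 < t := le_lt_trans M_ge0 M_lt.
have [s0 /sums_terms_cvg0 /(_ t t_gt0) [K tail_small]] := f_sums z0 (lexx _).
(* Averaging f over the circle through z0, twisted by a q-th root of unity,
   keeps among the first q coefficients only the i-th one, multiplied by q, which
   has absolute value 1 since q <> p; the later ones are below t since q > K. *)
have [q q_big q_prime] := prime_above (maxn (maxn K i) p).
move: q_big; rewrite !gtn_max => /andP[/andP[Kq iq] pq].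
have q_gt0 := prime_gt0 q_prime.
have [z z_prim] := prim_root_exists q_prime (natr_neq0 q_gt0).
have abs_z : abs z = 1 := abs_unity_root q_gt0 (prim_expr_order z_prim).
set u := z ^+ (q - i).
have u_zi : u * z ^+ i = 1 by rewrite -exprD subnK ?(prim_expr_order z_prim) // ltnW.
have abs_u : abs u = 1 by rewrite absX abs_z expr1n.
have /choice[sj hsj] : forall j, exists s, sums abs f (z ^+ j * z0) s.
  by move=> j; apply: f_sums; rewrite absM absX abs_z expr1n mul1r.
set C := fun k => \sum_(j < q) (u * z ^+ k) ^+ j.
have Ci : abs (f i * z0 ^+ i * C i) = t.
  by rewrite /C (sum_prim_root_filter z_prim u_zi iq iq) eqxx !absM absX
    abs_natr_prime ?mulr1 // gtn_eqF.
have Ck k : k != i -> abs (f k * z0 ^+ k * C k) < t.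
  move=> k_neq_i; have [kq|qk] := ltnP k q.
    by rewrite /C (sum_prim_root_filter z_prim u_zi iq kq) (negbTE k_neq_i) mulr0 abs0.
  rewrite absM; apply: le_lt_trans (ler_wpM2l (abs_ge0 _) (_ : _ <= 1)) _.
    by apply: abs_sum_le => // j _; rewrite !absX absM absX abs_u abs_z !expr1n mulr1.
  by rewrite mulr1 -[_ * _]subr0 tail_small // (leq_trans (ltnW Kq)).
have S_abs n : (i < n)%N -> abs (\sum_(k < n) f k * z0 ^+ k * C k) = t.
  move=> i_lt_n; rewrite -Ci.
  apply: (abs_sum_dominant (i0 := Ordinal i_lt_n)) => [|k k_neq_i]; rewrite Ci //.
  by apply: Ck; apply: contra k_neq_i => /eqP ki; apply/eqP/val_inj.
have lim_bound : abs (\sum_(j < q) u ^+ j * sj j) <= M.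
  apply: abs_sum_le => // j _; rewrite absM absX abs_u expr1n mul1r.
  by apply: f_bound (hsj j); rewrite absM absX abs_z expr1n mul1r.
have lim_abs := cvgL_abs_eq (cvgL_unity_average u q hsj) t_gt0 S_abs.
by move: lim_bound; rewrite lim_abs leNgt M_lt.
Qed.

Lemma normrho_le_norm1 f rho : 0 < rho < 1 -> (normrho abs f rho <= norm1 abs f)%E.
Proof. by move=> rho01; apply: ereal_sup_ubound; exists rho. Qed.

Lemma gauss_le_of_normrho f w M : abs w < 1 ->
  (forall z, abs z < 1 -> exists s, sums abs f z s) ->
  (normrho abs f (abs w) <= M%:E)%E -> gauss_le f (abs w) M.
Proof.
move=> w_lt1 f_sums fM; apply: gauss_le_of_sums_bound => [z zw|z s zw hs].
  exact/f_sums/(le_lt_trans zw).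
by rewrite -lee_fin (le_trans _ fM) //; apply: ereal_sup_ubound; exists z, s.
Qed.

Lemma exists_abs_root_p n : (0 < n)%N -> exists w : L, abs w ^+ n = P^-1 /\ 0 < abs w < 1.
Proof.
move=> n_gt0; have [w wn] := exists_nth_root (p%:R : L) n_gt0.
have hw : abs w ^+ n = P^-1 by rewrite -absX wn abs_natr_p.
exists w; split => //; apply/andP; split.
  rewrite lt_def abs_ge0 andbT; apply/eqP => w0; move: hw.
  by rewrite w0 expr0n gtn_eqF //= => /eqP; rewrite eq_sym invr_eq0 gt_eqF ?P_gt0.
by rewrite -(expr_lt1 n_gt0 (abs_ge0 w)) hw invf_lt1 ?P_gt0 ?P_gt1.
Qed.

Lemma exists_radius_above x : 0 <= x -> x < 1 -> exists w : L, x < abs w < 1.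
Proof.
move=> x_ge0 x_lt1.
have pV_gt0 : 0 < P^-1 by rewrite invr_gt0 P_gt0.
have [n hn] := geometric_small 1 x_ge0 x_lt1 pV_gt0.
have [w [wn /andP[_ w_lt1]]] := exists_abs_root_p (ltn0Sn n).
exists w; rewrite w_lt1 andbT ltNge; apply/negP => wx.
have := hn n.+1 (leqnSn n); rewrite mul1r -wn ltNge.
by rewrite lerXn2r ?nnegrE ?abs_ge0.
Qed.

Lemma in_Qp_ratr q : in_Qp abs (ratr q).
Proof. by move=> eps eps_gt0; exists q; rewrite subrr abs0. Qed.

Lemma in_Qp_nat n : in_Qp abs n%:R.
Proof. by rewrite -(ratr_nat L); apply: in_Qp_ratr. Qed.

Lemma in_QpD a b : in_Qp abs a -> in_Qp abs b -> in_Qp abs (a + b).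
Proof.
move=> ha hb eps eps_gt0; have [q1 h1] := ha eps eps_gt0; have [q2 h2] := hb eps eps_gt0.
exists (q1 + q2); rewrite (ratrD_char0 natr_neq0) opprD addrACA.
exact: abs_add_lt.
Qed.

Lemma in_QpM a b : in_Qp abs a -> in_Qp abs b -> in_Qp abs (a * b).
Proof.
move=> ha hb eps eps_gt0.
set M := abs a + abs b + 1.
have M_gt0 : 0 < M by rewrite ltr_wpDl ?addr_ge0 ?abs_ge0.
set d := Num.min 1 (eps / M).
have d_gt0 : 0 < d by rewrite lt_min ltr01 divr_gt0.
have dM : d * M <= eps by rewrite -ler_pdivlMr // ge_min lexx orbT.
have [q1 h1] := ha d d_gt0; have [q2 h2] := hb d d_gt0.
have abs_q2 : abs (ratr q2 : L) <= M.
  rewrite -(addrNK b (ratr q2)); apply: abs_add_le.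
    rewrite absB (le_trans (ltW h2)) // (@le_trans _ _ 1) ?ge_min ?lexx //.
    by rewrite /M lerDr addr_ge0 ?abs_ge0.
  by rewrite /M ler_wpDr // ler_wpDl ?abs_ge0.
exists (q1 * q2); rewrite (ratrM_char0 natr_neq0).
rewrite (_ : _ - _ = a * (b - ratr q2) + (a - ratr q1) * ratr q2); last by ring.
apply: abs_add_lt; rewrite absM.
  apply: le_lt_trans (ler_wpM2r (abs_ge0 _) (_ : abs a <= M)) _.
    by rewrite /M ler_wpDr // lerDl abs_ge0.
  by apply: lt_le_trans dM; rewrite mulrC ltr_pM2r.
apply: le_lt_trans (ler_wpM2l (abs_ge0 _) abs_q2) _.
by apply: lt_le_trans dM; rewrite ltr_pM2r.
Qed.

Lemma in_Qp_sum n (F : 'I_n -> L) :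
  (forall i, in_Qp abs (F i)) -> in_Qp abs (\sum_(i < n) F i).
Proof.
move=> hF; apply: (big_ind (in_Qp abs)) => //; first exact: (in_Qp_nat 0).
by move=> x y; apply: in_QpD.
Qed.

Lemma in_Qp_lim u l : (forall n, in_Qp abs (u n)) -> cvgL abs u l -> in_Qp abs l.
Proof.
move=> hu hl eps eps_gt0; have [N hN] := hl eps eps_gt0; have [q hq] := hu N eps eps_gt0.
exists q; rewrite (_ : l - _ = (u N - ratr q) + - (u N - l)); last by ring.
by apply: abs_add_lt; rewrite ?absN ?hN.
Qed.

Lemma in_Qp_pprod G : (forall n, (1 <= n)%N -> in_H abs (G n)) ->
  forall N i, in_Qp abs (pprod G N i).
Proof.
move=> G_in_H; elim=> [|N IH] i /=.
  by rewrite /ps_one; case: eqP => _; [exact: (in_Qp_nat 1) | exact: (in_Qp_nat 0)].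
apply: in_Qp_sum => j; apply: in_QpM => //.
exact: (G_in_H N.+1 isT).1.
Qed.

Lemma gauss_le_coef_cvg (F : nat -> nat -> L) r E a k : 0 < r -> 0 <= a -> a < 1 ->
  (forall N d, (k <= N)%N ->
     gauss_le (ps_sub (F (N + d)%N) (F N)) r (E * a ^+ (N - k))) ->
  forall i, exists l, cvgL abs (fun N => F N i) l.
Proof.
move=> r_gt0 a_ge0 a_lt1 hF i; apply: (abs_complete hC) => eps eps_gt0.
have ri_gt0 := exprn_gt0 i r_gt0.
have [n hn] := geometric_small E a_ge0 a_lt1 (mulr_gt0 eps_gt0 ri_gt0).
exists (k + n)%N => m m' hm hm'.
wlog mm' : m m' hm hm' / (m <= m')%N.
  by move=> H; case: (leqP m m') => [|/ltnW] mm'; [|rewrite absB]; apply: H.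
have km : (k <= m)%N := leq_trans (leq_addr n k) hm.
rewrite -(ltr_pM2r ri_gt0) absB.
have := hF m (m' - m)%N km i; rewrite subnKC // => /le_lt_trans; apply.
by apply: hn; rewrite leq_subRL // addnC.
Qed.

Lemma gauss_le_cvg_sub (F : nat -> nat -> L) l r B N : 0 < r ->
  (forall i, cvgL abs (fun M => F M i) (l i)) ->
  (forall d, gauss_le (ps_sub (F (N + d)%N) (F N)) r B) ->
  gauss_le (ps_sub (F N) l) r B.
Proof.
move=> r_gt0 hl hF i; have ri_gt0 := exprn_gt0 i r_gt0.
rewrite -ler_pdivlMr //.
apply: (cvgL_abs_le (N0 := N) (cvgLB (cvgL_cst (F N i)) (hl i))) => M NM.
by rewrite ler_pdivlMr // absB; have := hF (M - N)%N i; rewrite subnKC.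
Qed.

Lemma ps_order_le f h rho M : 0 < rho < 1 ->
  (forall m : nat, (normrho abs f (rho `^ ((p ^ m)%:R)^-1) <=
     (P `^ (m%:R * h) * M)%:E)%E) ->
  (ps_order p abs f <= h%:E)%E.
Proof.
move=> rho01 f_bound; apply: ereal_inf_lbound; exists h; split => //.
exists rho; split => //; apply: le_lt_trans (ltry M).
apply: ge_ereal_sup => _ [m ->].
apply: le_trans (lee_wpmul2l _ (f_bound m)) _; first by rewrite lee_fin powR_ge0.
rewrite -EFinM lee_fin mulrA -powRD ?(lt0r_neq0 P_gt0) ?implybT //.
by rewrite addrC subrr powRr0 mul1r.
Qed.

Section PartialProducts.
Variables (lam mu nu : R) (G : nat -> nat -> L) (c : nat).
Hypotheses (lam_gt0 : 0 < lam) (mu_ge0 : 0 <= mu) (nu_le : nu <= lam * c%:R).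
Hypothesis G_in_H : forall n, (1 <= n)%N -> in_H abs (G n).
Hypothesis G_norm1 : forall n, (1 <= n)%N -> (norm1 abs (G n) <= (P `^ mu)%:E)%E.
Hypothesis G_near1 : forall rho : R, 0 < rho < 1 -> forall k, is_n0 p rho k ->
  forall n, (k <= n)%N -> (1 <= n)%N ->
    (normrho abs (ps_sub (G n) (ps_one L)) rho <=
      (P `^ nu * P `^ (- (lam * (n - k)%:R)))%:E)%E.

Local Notation A := (P `^ mu).
Local Notation a := (P `^ (- lam)).
Local Notation B k := (A ^+ (k + c) * Num.max 1 (P `^ nu)).

Lemma A_ge1 : 1 <= A.
Proof. by rewrite -[X in X <= _](powRr0 P); apply: ler_powR => //; apply: ltW P_gt1. Qed.

Lemma a_ge0 : 0 <= a.
Proof. exact: powR_ge0. Qed.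

Lemma a_lt1 : a < 1.
Proof.
rewrite lt_neqAle powR_eq1 negb_or gt_eqF ?P_gt1 //= negb_or ltNge (ltW P_gt0) /=.
rewrite oppr_eq0 gt_eqF //= -[X in _ <= X](powRr0 P).
by apply: ler_powR; [apply: ltW P_gt1 | rewrite oppr_le0 ltW].
Qed.

Lemma bound_ge0 k : 0 <= B k.
Proof. by rewrite mulr_ge0 ?exprn_ge0 ?le_max ?ler01 // (le_trans ler01 A_ge1). Qed.

Section FixedRadius.
Variables (w : L) (k : nat).
Hypotheses (w_gt0 : 0 < abs w) (w_lt1 : abs w < 1) (w_n0 : is_n0 p (abs w) k).

Local Notation r := (abs w).

Lemma gauss_le_factor n : (1 <= n)%N -> gauss_le (G n) r A.
Proof.
move=> n_ge1; apply: gauss_le_of_normrho w_lt1 (G_in_H n_ge1).2 _.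
by apply: le_trans (G_norm1 n_ge1); apply: normrho_le_norm1; rewrite w_gt0.
Qed.

Lemma gauss_le_factor_sub1 n : (k <= n)%N -> (1 <= n)%N ->
  gauss_le (ps_sub (G n) (ps_one L)) r (P `^ nu * a ^+ (n - k)).
Proof.
move=> kn n_ge1; apply: gauss_le_of_normrho w_lt1 _ _.
  move=> z /(G_in_H n_ge1).2[s hs]; exists (s - 1); exact: sumsB hs (sums_one z).
by rewrite -powR_oppM_nat ?ler0n //; apply: G_near1; rewrite ?w_gt0.
Qed.

Lemma gauss_le_factor_tail n : (k + c <= n)%N -> (1 <= n)%N -> gauss_le (G n) r 1.
Proof.
move=> kcn n_ge1.
have -> : G n = fun i => ps_sub (G n) (ps_one L) i + ps_one L i.
  by apply/funext => i; rewrite /ps_sub subrK.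
apply: gauss_leD (ltW w_gt0) _ (gauss_le_one r).
apply: gauss_le_trans (gauss_le_factor_sub1 (leq_trans (leq_addr c k) kcn) n_ge1) _.
rewrite -powR_oppM_nat ?ler0n // -powRD ?(lt0r_neq0 P_gt0) ?implybT //.
rewrite -[X in _ <= X](powRr0 P); apply: ler_powR; first exact: ltW P_gt1.
rewrite subr_le0 (le_trans nu_le) // ler_pM2l // ler_nat.
by rewrite leq_subRL ?(leq_trans (leq_addr c k)) // addnC.
Qed.

Lemma gauss_le_pprod_min N : gauss_le (pprod G N) r (A ^+ minn N (k + c)).
Proof.
elim: N => [|N IH] /=; first by rewrite min0n expr0; apply: gauss_le_one.
have [N_lt|N_ge] := ltnP N (k + c).
  rewrite (minn_idPl N_lt) exprSr.
  apply: gauss_leM (ltW w_gt0) _ (gauss_le_factor _) => //.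
  by move: IH; rewrite (minn_idPl (ltnW N_lt)).
rewrite (minn_idPr (leqW N_ge)) -[_ ^+ _]mulr1.
apply: gauss_leM (ltW w_gt0) _ (gauss_le_factor_tail (leqW N_ge) _) => //.
by move: IH; rewrite (minn_idPr N_ge).
Qed.

Lemma gauss_le_pprod N : gauss_le (pprod G N) r (A ^+ (k + c)).
Proof.
apply: gauss_le_trans (gauss_le_pprod_min N) _.
by rewrite ler_weXn2l ?A_ge1 ?geq_minr.
Qed.

Lemma gauss_le_pprod_succ N : (k <= N)%N ->
  gauss_le (ps_sub (pprod G N.+1) (pprod G N)) r (B k * a ^+ (N - k)).
Proof.
move=> kN; rewrite /= ps_mul_sub_one -mulrA.
apply: gauss_leM (ltW w_gt0) (gauss_le_pprod N) _.
apply: gauss_le_trans (gauss_le_factor_sub1 (leqW kN) isT) _.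
rewrite ler_pM ?powR_ge0 ?exprn_ge0 ?a_ge0 ?le_max ?lexx ?orbT //.
by rewrite ler_wiXn2l ?a_ge0 ?(ltW a_lt1) // subSn.
Qed.

Lemma gauss_le_pprod_sub N d : (k <= N)%N ->
  gauss_le (ps_sub (pprod G (N + d)) (pprod G N)) r (B k * a ^+ (N - k)).
Proof.
move=> kN; elim: d => [|d IH].
  move=> i; rewrite addn0 /ps_sub subrr abs0 mul0r.
  by rewrite mulr_ge0 ?bound_ge0 ?exprn_ge0 ?a_ge0.
have -> : ps_sub (pprod G (N + d.+1)) (pprod G N) = fun i =>
    ps_sub (pprod G (N + d).+1) (pprod G (N + d)) i +
    ps_sub (pprod G (N + d)) (pprod G N) i.
  by apply/funext => i; rewrite /ps_sub addnS subrKA.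
apply: gauss_leD (ltW w_gt0) _ IH.
apply: gauss_le_trans (gauss_le_pprod_succ (leq_trans kN (leq_addr d N))) _.
by rewrite ler_wpM2l ?bound_ge0 ?ler_wiXn2l ?a_ge0 ?(ltW a_lt1) ?leq_sub2r ?leq_addr.
Qed.

End FixedRadius.

Lemma pprod_coef_cvg :
  exists Ginf : nat -> L, forall i, cvgL abs (fun N => pprod G N i) (Ginf i).
Proof.
have [w /andP[w_gt0 w_lt1]] := exists_radius_above (lexx 0) ltr01.
have [k w_n0] := is_n0_exists p_prime w_gt0 w_lt1.
have [Ginf Ginf_cvg] :=
  choice (gauss_le_coef_cvg w_gt0 a_ge0 a_lt1 (gauss_le_pprod_sub w_gt0 w_lt1 w_n0)).
by exists Ginf.
Qed.

Variable Ginf : nat -> L.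
Hypothesis Ginf_cvg : forall i, cvgL abs (fun N => pprod G N i) (Ginf i).

Section LimitAtRadius.
Variables (w : L) (k : nat).
Hypotheses (w_gt0 : 0 < abs w) (w_lt1 : abs w < 1) (w_n0 : is_n0 p (abs w) k).

Lemma gauss_le_pprod_limit N : (k <= N)%N ->
  gauss_le (ps_sub (pprod G N) Ginf) (abs w) (B k * a ^+ (N - k)).
Proof.
move=> kN; apply: gauss_le_cvg_sub w_gt0 Ginf_cvg _ => d.
exact: gauss_le_pprod_sub w_gt0 w_lt1 w_n0 N d kN.
Qed.

Lemma gauss_le_limit : gauss_le Ginf (abs w) (B k).
Proof.
have -> : Ginf = ps_sub (pprod G k) (ps_sub (pprod G k) Ginf).
  by apply/funext => i; rewrite /ps_sub opprB addrC subrK.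
apply: gauss_leB (ltW w_gt0) _ _.
  apply: gauss_le_trans (gauss_le_pprod w_gt0 w_lt1 w_n0 k) _.
  by rewrite ler_peMr ?exprn_ge0 ?(le_trans ler01 A_ge1) // le_max lexx.
by have := gauss_le_pprod_limit (leqnn k); rewrite subnn expr0 mulr1.
Qed.

End LimitAtRadius.

Lemma limit_in_H : in_H abs Ginf.
Proof.
split=> [i|z z_lt1].
  by apply: in_Qp_lim (Ginf_cvg i) => N; apply: in_Qp_pprod.
have [w /andP[zw w_lt1]] := exists_radius_above (abs_ge0 z) z_lt1.
have w_gt0 := le_lt_trans (abs_ge0 z) zw.
have [k w_n0] := is_n0_exists p_prime w_gt0 w_lt1.
exact: gauss_le_sums (gauss_le_limit w_gt0 w_lt1 w_n0) zw.
Qed.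

Lemma pprod_normrho_cvg rho : 0 < rho < 1 ->
  forall eps : R, 0 < eps -> exists N0, forall N, (N0 <= N)%N ->
    (normrho abs (ps_sub (pprod G N) Ginf) rho <= eps%:E)%E.
Proof.
move=> /andP[rho_gt0 rho_lt1] eps eps_gt0.
have [w /andP[rho_w w_lt1]] := exists_radius_above (ltW rho_gt0) rho_lt1.
have w_gt0 := lt_trans rho_gt0 rho_w.
have [k w_n0] := is_n0_exists p_prime w_gt0 w_lt1.
have [n hn] := geometric_small (B k) a_ge0 a_lt1 eps_gt0.
exists (k + n)%N => N kn_N; have kN := leq_trans (leq_addr n k) kn_N.
have := gauss_le_pprod_limit w_gt0 w_lt1 w_n0 kN.
move=> /normrho_le_gauss /(_ (ltW rho_w)) /le_trans; apply.
by rewrite lee_fin ltW // hn // leq_subRL // addnC.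
Qed.

Lemma limit_order_le : (ps_order p abs Ginf <= mu%:E)%E.
Proof.
have rho_gt0 : 0 < P^-1 by rewrite invr_gt0 P_gt0.
have rho_lt1 : P^-1 < 1 by rewrite invf_lt1 ?P_gt0 ?P_gt1.
have [kr kr_n0] := is_n0_exists p_prime rho_gt0 rho_lt1.
apply: (ps_order_le (M := B kr) (introT andP (conj rho_gt0 rho_lt1))) => m.
have pm_gt0 : (0 < p ^ m)%N by rewrite expn_gt0 prime_gt0.
have [wm [wm_pow /andP[wm_gt0 wm_lt1]]] := exists_abs_root_p pm_gt0.
have -> : P^-1 `^ ((p ^ m)%:R)^-1 = abs wm.
  rewrite -wm_pow -powR_mulrn ?abs_ge0 // -powRrM mulfV ?powRr1 ?abs_ge0 //.
  by rewrite pnatr_eq0 -lt0n.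
have [km km_n0] := is_n0_exists p_prime wm_gt0 wm_lt1.
have kr_n0' : is_n0 p (abs wm ^+ (p ^ m)) kr by rewrite wm_pow.
have km_le := is_n0_root_le kr_n0' km_n0.
apply: le_trans (normrho_le_gauss (gauss_le_limit wm_gt0 wm_lt1 km_n0) (lexx _)) _.
rewrite lee_fin (mulrC m%:R) powRrM powR_mulrn ?powR_ge0 // mulrA -exprD.
rewrite ler_wpM2r ?le_max ?ler01 // ler_weXn2l ?A_ge1 //.
by rewrite addnA leq_add2r addnC.
Qed.

End PartialProducts.

End CpAnalysis.

Theorem mainTheorem4 (p : nat) (R : realType) (L : closedFieldType) (abs : L -> R)
  (p_prime : prime p) (p_odd : odd p) (hCp : is_Cp p abs)
  (lam mu : R) (lam_gt0 : 0 < lam) (mu_ge0 : 0 <= mu)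
  (G : nat -> nat -> L)
  (GH : forall n, (1 <= n)%N -> in_H abs (G n))
  (Gtype : type_lm p abs G lam mu) :
  exists Ginf : nat -> L,
    in_H abs Ginf /\
    (forall rho : R, 0 < rho < 1 ->
       forall eps : R, 0 < eps -> exists N0, forall N, (N0 <= N)%N ->
         (normrho abs (ps_sub (pprod G N) Ginf) rho <= eps%:E)%E) /\
    (ps_order p abs Ginf <= mu%:E)%E.
Proof.
case: Gtype => G_norm1 [nu G_near1].
have [c nu_le] : exists c : nat, nu <= lam * c%:R.
  exists (Num.Def.archi_bound `|nu / lam|); rewrite -ler_pdivrMl // mulrC.
  by apply: le_trans (real_ler_norm (num_real _)) (ltW (archi_boundP _)).
have [Ginf Ginf_cvg] :=
  pprod_coef_cvg hCp p_prime lam_gt0 mu_ge0 nu_le GH G_norm1 G_near1.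
exists Ginf; split; [|split].
- exact: (limit_in_H hCp p_prime lam_gt0 mu_ge0 nu_le GH G_norm1 G_near1 Ginf_cvg).
- exact: (pprod_normrho_cvg hCp p_prime lam_gt0 mu_ge0 nu_le GH G_norm1 G_near1 Ginf_cvg).
- exact: (limit_order_le hCp p_prime lam_gt0 mu_ge0 nu_le GH G_norm1 G_near1 Ginf_cvg).
Qed.
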